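(* Let $t\ge 2$ and $w\ge 1$ be integers and $u=\lfloor(\frac{t}{2}+1)^2\rfloor$. If a $(w,v)$ set system $(\mathcal{X},\mathcal{B})$ is not a $t$-IPPS$(w,v)$, then there exist an integer $s$ with $2\le s\le u$ and an $s$-element subset $\mathcal{U}\subseteq\mathcal{B}$ such that $\big|\bigcup_{B\in\mathcal{U}}B\big|\le (s-1)w$.
   Context: A $(w,v)$ set system is a pair $(\mathcal{X},\mathcal{B})$ with $|\mathcal{X}|=v$ and $\mathcal{B}$ a family of $w$-element subsets (blocks) of $\mathcal{X}$. For a $w$-subset $T\subseteq\mathcal{X}$ let $P_t(T)=\{\mathcal{P}\subseteq\mathcal{B}: |\mathcal{P}|\le t,\ T\subseteq\bigcup_{B\in\mathcal{P}}B\}$. The set system is a $t$-IPPS$(w,v)$ if for every $w$-subset $T\subseteq\mathcal{X}$, either $P_t(T)=\emptyset$ or $\bigcap_{\mathcal{P}\in P_t(T)}\mathcal{P}\neq\emptyset$. *)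

From mathcomp Require Import all_boot.
Set Implicit Arguments. Unset Strict Implicit. Unset Printing Implicit Defensive.

Definition set_system (X : finType) (w v : nat) (B : {set {set X}}) : Prop :=
  #|X| = v /\ (forall b, b \in B -> #|b| = w).

Definition Pt (X : finType) (B : {set {set X}}) (t : nat) (T : {set X})
  : {set {set {set X}}} :=
  [set P : {set {set X}} | (P \subset B) && (#|P| <= t) &&
                           (T \subset \bigcup_(b in P) b)].

Definition IPPS (X : finType) (t w v : nat) (B : {set {set X}}) : Prop :=
  set_system w v B /\
  forall T : {set X}, #|T| = w ->
    Pt B t T = set0 \/ \bigcap_(P in Pt B t T) P != set0.

From mathcomp Require Import all_boot.
From mathcomp Require Import zify.
Set Implicit Arguments. Unset Strict Implicit. Unset Printing Implicit Defensive.

(* If the system is not a t-IPPS, some w-set T has members of P_t(T) but no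
   block common to all of them. Take P, Q in P_t(T) with |P ∩ Q| = k minimal
   and, for each block c of P ∩ Q, a member of P_t(T) avoiding c. Together these
   blocks cover every point of T twice, so double counting incidences gives
   |⋃U| + w <= |U| w for their union U. Minimality of k makes each avoiding
   family contribute at most t - k - 1 blocks outside P ∪ Q, whence
   |U| <= 2t - k + k(t - k - 1) <= (t + 2)^2 / 4. *)

Lemma quarter_square_bound t k : 4 * (t + t - k + k * (t - k.+1)) <= (t + 2) ^ 2.
Proof.
case: (ltnP k t) => [lt_kt|le_tk]; last first.
  have -> : t - k.+1 = 0 by lia.
  nia.
have [m ->] : exists m, t = k + m.+1 by exists (t - k.+1); lia.
have -> : k + m.+1 - k.+1 = m by lia.
(* the difference of the two sides is (k - m + 1)^2 *)
case: (leqP m k) => [/subnK <-|/subnK <-]; nia.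
Qed.

Lemma leq_card_bigcup (I Y : finType) (A : {pred I}) (F : I -> {set Y}) :
  #|\bigcup_(i in A) F i| <= \sum_(i in A) #|F i|.
Proof.
elim/big_rec2: _ => [|i S n _ IH]; first by rewrite cards0.
exact: leq_trans (leq_card_setU _ _) (leq_add _ IH).
Qed.

Section Degree.
Variable Y : finType.
Implicit Types (U : {set {set Y}}) (T : {set Y}) (x : Y).

Definition degree U x := #|[set b in U | x \in b]|.

Lemma sum_card_eq_sum_degree U : \sum_(b in U) #|b| = \sum_x degree U x.
Proof.
under eq_bigr => b _ do rewrite -sum1_card.
rewrite (exchange_big_dep predT) //=; apply: eq_bigr => x _.
by rewrite /degree -sum1_card; apply: eq_bigl => b; rewrite inE.
Qed.

Lemma degree_gt0 U x : (0 < degree U x) = (x \in cover U).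
Proof.
apply/idP/bigcupP => [|[b bU xb]]; rewrite card_gt0.
  by case/set0Pn => b; rewrite inE => /andP[bU xb]; exists b.
by apply/set0Pn; exists b; rewrite inE bU.
Qed.

Lemma degree_gt1 U x b1 b2 :
  b1 \in U -> b2 \in U -> b1 != b2 -> x \in b1 -> x \in b2 -> 1 < degree U x.
Proof.
move=> b1U b2U neq_b xb1 xb2.
apply: leq_trans (_ : 2 <= #|[set b1; b2]|) _; first by rewrite cards2 neq_b.
by apply/subset_leq_card/subsetP => b /set2P[] ->; rewrite inE ?b1U ?b2U.
Qed.

Lemma card_cover_add_le_sum_card U T :
  (forall x, x \in T -> 1 < degree U x) ->
  #|cover U| + #|T| <= \sum_(b in U) #|b|.
Proof.
move=> deg_T; rewrite sum_card_eq_sum_degree.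
rewrite -!sum1_card big_mkcond [X in _ + X]big_mkcond -big_split.
apply: leq_sum => x _; case: (boolP (x \in T)) => [/deg_T|_] /=; last first.
  by rewrite addn0 -degree_gt0; case: ifP.
by rewrite addn1; case: ifP => // _ /ltnW.
Qed.

End Degree.

Lemma PtP (X : finType) (B : {set {set X}}) t (T : {set X}) (P : {set {set X}}) :
  reflect [/\ P \subset B, #|P| <= t & T \subset cover P] (P \in Pt B t T).
Proof. by rewrite inE -andbA; apply: and3P. Qed.

Section DoubleCover.
Variables (X : finType) (B : {set {set X}}) (t : nat) (T : {set X}).
Variables (P Q : {set {set X}}) (avoid : {set X} -> {set {set X}}).
Hypotheses (PPt : P \in Pt B t T) (QPt : Q \in Pt B t T).
Hypothesis min_PQ :
  forall R S, R \in Pt B t T -> S \in Pt B t T -> #|P :&: Q| <= #|R :&: S|.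
Hypotheses (avoidPt : forall c, avoid c \in Pt B t T)
           (avoid_notin : forall c, c \notin avoid c).

Definition double_cover := P :|: Q :|: \bigcup_(c in P :&: Q) avoid c.

Lemma double_cover_sub : double_cover \subset B.
Proof.
have /PtP[PB _ _] := PPt; have /PtP[QB _ _] := QPt.
rewrite !subUset PB QB; apply/bigcupsP => c _.
by have /PtP[] := avoidPt c.
Qed.

Lemma sub_cover_double_cover : T \subset cover double_cover.
Proof.
have /PtP[_ _ /subset_trans] := PPt; apply; apply/bigcupsP => b bP.
by apply: bigcup_sup; rewrite !inE bP.
Qed.

(* A block lying in both P and Q is missed by [avoid] of it, which then
   covers the point a second time. *)
Lemma degree_double_cover x : x \in T -> 1 < degree double_cover x.
Proof.
move=> xT; have /PtP[_ _ /subsetP/(_ x xT)/bigcupP[b1 b1P xb1]] := PPt.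
have /PtP[_ _ /subsetP/(_ x xT)/bigcupP[b2 b2Q xb2]] := QPt.
have b1U : b1 \in double_cover by rewrite !inE b1P.
have b2U : b2 \in double_cover by rewrite !inE b2Q orbT.
case: (eqVneq b1 b2) => [eq_b|neq_b]; last exact: degree_gt1 b1U b2U neq_b xb1 xb2.
have /PtP[_ _ /subsetP/(_ x xT)/bigcupP[b3 b3A xb3]] := avoidPt b1.
apply: (degree_gt1 b1U _ _ xb1 xb3).
  by apply/setUP; right; apply/bigcupP; exists b1; rewrite // inE b1P eq_b.
by apply: contraNneq _ (avoid_notin b1) => {1}->.
Qed.

Local Notation k := #|P :&: Q|.

(* By minimality [avoid c] meets each of P and Q in at least k blocks, but
   meets P ∩ Q in at most k - 1, since c is missed. *)
Lemma card_avoid_new c : c \in P :&: Q -> #|avoid c :\: (P :|: Q)| <= t - k.+1.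
Proof.
move=> cPQ; have /PtP[_ card_avoid _] := avoidPt c.
have meetP := min_PQ (avoidPt c) PPt; have meetQ := min_PQ (avoidPt c) QPt.
have meetPQ : #|(avoid c :&: P) :&: (avoid c :&: Q)| <= #|(P :&: Q) :\ c|.
  apply/subset_leq_card/subsetP => b; rewrite !inE => /andP[/andP[bA bP] /andP[_ bQ]].
  by rewrite bP bQ !andbT; apply: contraNneq _ (avoid_notin c) => {1}<-.
move: meetPQ (cardsD1 c (P :&: Q)); rewrite cPQ [#|avoid c :\: _|]cardsD setIUr cardsU; lia.
Qed.

Lemma card_double_cover : #|double_cover| <= t + t - k + k * (t - k.+1).
Proof.
have /PtP[_ card_P _] := PPt; have /PtP[_ card_Q _] := QPt.
have new_blocks :
    double_cover \subset P :|: Q :|: \bigcup_(c in P :&: Q) (avoid c :\: (P :|: Q)).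
  apply/subsetP => b /setUP[bPQ|/bigcupP[c cPQ bA]]; first by rewrite inE bPQ.
  rewrite inE; case: (boolP (b \in P :|: Q)) => //= bPQ.
  by apply/bigcupP; exists c; rewrite // inE bPQ.
apply: leq_trans (subset_leq_card new_blocks) _.
apply: leq_trans (leq_card_setU _ _) _; apply: leq_add.
  by rewrite cardsU; lia.
apply: leq_trans (leq_card_bigcup _ _) _.
by rewrite -sum_nat_const; apply: leq_sum => c; apply: card_avoid_new.
Qed.

Lemma four_card_double_cover : 4 * #|double_cover| <= (t + 2) ^ 2.
Proof.
apply: leq_trans (quarter_square_bound t k).
by rewrite leq_pmul2l //; apply: card_double_cover.
Qed.

End DoubleCover.

Lemma not_IPPS_witness (X : finType) t w v (B : {set {set X}}) :
  set_system w v B -> ~ IPPS t w v B ->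
  exists T : {set X}, #|T| = w /\ \bigcap_(P in Pt B t T) P = set0.
Proof.
move=> sys notIPPS.
case: (boolP [exists T : {set X},
  (#|T| == w) && (\bigcap_(P in Pt B t T) P == set0)]) => [|/existsPn noT].
  by case/existsP=> T /andP[/eqP card_T /eqP capT]; exists T.
case: notIPPS; split=> // T card_T.
case: (eqVneq (Pt B t T) set0) => [|_]; [left | right] => //.
by move: (noT T); rewrite card_T eqxx.
Qed.

Lemma bigcap_eq0_avoid (Y : finType) (F : {set {set Y}}) (c : Y) :
  \bigcap_(R in F) R = set0 -> exists2 R, R \in F & c \notin R.
Proof.
move=> capF; case: (boolP [exists R in F, c \notin R]) => [/exists_inP //|/exists_inPn noR].
have : c \in \bigcap_(R in F) R by apply/bigcapP => R /noR /negbNE.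
by rewrite capF inE.
Qed.

Lemma exists_min_meet_pair (Y : finType) (F : {set {set Y}}) P0 :
  P0 \in F -> exists P Q, [/\ P \in F, Q \in F &
    forall R S, R \in F -> S \in F -> #|P :&: Q| <= #|R :&: S|].
Proof.
move=> P0F; have P0F2 : (P0, P0) \in setX F F by apply/setXP.
case: (arg_minnP (fun PQ => #|PQ.1 :&: PQ.2|) P0F2) => [[P Q] /setXP[PF QF] min_PQ].
by exists P, Q; split=> // R S RF SF; apply: (min_PQ (R, S)); apply/setXP.
Qed.

Theorem corollary2 (t w v : nat) (X : finType) (B : {set {set X}}) :
  2 <= t -> 1 <= w ->
  set_system w v B ->
  ~ IPPS t w v B ->
  exists s : nat, exists U : {set {set X}},
    [/\ 2 <= s, s <= (t + 2) ^ 2 %/ 4, U \subset B, #|U| = s &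
        #|\bigcup_(b in U) b| <= (s - 1) * w].
Proof.
move=> _ w_gt0 sys notIPPS.
have [T [card_T capT]] := not_IPPS_witness sys notIPPS.
have [avoid avoidPt avoid_notin] := fin_all_exists2 (fun c => bigcap_eq0_avoid c capT).
(* [avoid set0] shows that P_t(T) is nonempty. *)
have [P [Q [PPt QPt min_PQ]]] := exists_min_meet_pair (avoidPt set0).
set U := double_cover P Q avoid.
have UB : U \subset B := double_cover_sub PPt QPt avoidPt.
have count : #|cover U| + w <= #|U| * w.
  have card_U : \sum_(b in U) #|b| = #|U| * w.
    by rewrite -sum_nat_const; apply: eq_bigr => b /(subsetP UB)/sys.2.
  rewrite -card_U -card_T card_cover_add_le_sum_card //.
  exact: degree_double_cover PPt QPt avoidPt avoid_notin.
have w_le : w <= #|cover U|.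
  by rewrite -card_T; apply: subset_leq_card; apply: sub_cover_double_cover PPt.
exists #|U|, U; split=> //.
- by rewrite -(leq_pmul2r w_gt0); lia.
- by rewrite leq_divRL // mulnC (four_card_double_cover PPt QPt min_PQ avoidPt avoid_notin).
- by move: count; rewrite /cover mulnBl mul1n; lia.
Qed.
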